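(* Let $\mathcal{H}$ be a separable Hilbert space and let $\{f_n\}_{n=1}^\infty$ be a pseudo-Riesz sequence (respectively a pseudo-frame, respectively a pseudo-Riesz basis) for $\mathcal{H}$, with synthesis operator $S_f:\ell^2(\mathbb{N})\to\mathcal{H}$, $S_f(c)=\sum_nc_nf_n$, and let $$\gamma=\inf_{c\notin\mathcal{N}_{S_f}}\frac{\|S_fc\|}{d(c,\mathcal{N}_{S_f})}>0,$$ where $\mathcal{N}_{S_f}$ is the nullspace of $S_f$ and $d(c,\mathcal{N}_{S_f})=\inf\{\|c-e\|:e\in\mathcal{N}_{S_f}\}$. If $\{g_n\}_{n=1}^\infty$ is a sequence in $\mathcal{H}$ with $\sum_{n=1}^\infty\|f_n-g_n\|^2<\gamma^2$, then $\{g_n\}$ is also a pseudo-Riesz sequence (respectively a pseudo-frame, respectively a pseudo-Riesz basis) for $\mathcal{H}$.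
   Context: A Bessel sequence is a pseudo-Riesz sequence if it becomes a Riesz sequence after removing finitely many appropriate vectors from it. A Bessel sequence is a pseudo-frame if it becomes a frame for $\mathcal{H}$ after adding finitely many appropriate vectors to it. A Bessel sequence $\{f_n\}$ is a pseudo-Riesz basis if there are a finite set $\sigma\subseteq\mathbb{N}$ and finitely many vectors $h_1,\dots,h_m\in\mathcal{H}$ such that $\{f_n\}_{n\notin\sigma}\cup\{h_1,\dots,h_m\}$ is a Riesz basis for $\mathcal{H}$. *)

From HB Require Import structures.
From mathcomp Require Import all_boot all_order all_algebra.
From mathcomp Require Import all_classical all_reals.
From mathcomp Require Import ereal topology normedtype sequences.
From mathcomp Require Import complex.

Set Implicit Arguments.
Unset Strict Implicit.
Unset Printing Implicit Defensive.

Import Order.TTheory GRing.Theory Num.Theory.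
Import numFieldNormedType.Exports.
Local Open Scope ring_scope.
Local Open Scope classical_set_scope.

Section HilbertDefs.
Variable R : realType.
Local Notation C := R[i].
Variable V : lmodType C.
Variable ip : V -> V -> C.   (* inner product <x, y>, linear in x *)

Definition hnorm (x : V) : R := Num.sqrt (complex.Re (ip x x)).

Definition separable_hilbert : Prop :=
  [/\ (forall (a : C) (x y z : V), ip (a *: x + y) z = a * ip x z + ip y z),
      (forall x y : V, ip y x = conjc (ip x y)),
      (forall x : V, 0 <= complex.Re (ip x x)),
      (forall x : V, ip x x = 0 -> x = 0)
    &
      (forall u : nat -> V,
          (forall e : R, 0 < e -> exists N : nat, forall m n : nat,
               (N <= m)%N -> (N <= n)%N -> hnorm (u m - u n) < e) ->
          exists l : V, (fun n => hnorm (u n - l)) @ \oo --> (0 : R))]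
  /\
      (exists d : nat -> V, forall (x : V) (e : R), 0 < e ->
          exists n : nat, hnorm (x - d n) < e).

Definition has_sum (u : nat -> V) (s : V) : Prop :=
  (fun N => hnorm (\sum_(i < N) u i - s)) @ \oo --> (0 : R).

Definition l2sq (c : nat -> C) : \bar R :=
  (\sum_(n <oo) ((ComplexField.Normc.normc (c n)) ^+ 2)%:E)%E.

Definition in_l2 (c : nat -> C) : Prop := (l2sq c < +oo)%E.

Definition l2norm (c : nat -> C) : R := Num.sqrt (fine (l2sq c)).

(* Families are given as (w : nat -> V) together with an index predicate
   P : pred nat: the family is {w n}_{n : P n}. *)

Definition bessel (f : nat -> V) : Prop :=
  exists B : R, 0 < B /\ forall x : V,
    (\sum_(n <oo) ((ComplexField.Normc.normc (ip x (f n))) ^+ 2)%:E <= (B * hnorm x ^+ 2)%:E)%E.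

Definition riesz_seq (w : nat -> V) (P : pred nat) : Prop :=
  exists A B : R, [/\ 0 < A, 0 < B & forall (N : nat) (c : nat -> C),
    let s2 := \sum_(i < N | P i) ComplexField.Normc.normc (c i) ^+ 2 in
    let v := \sum_(i < N | P i) c i *: w i in
    A * s2 <= hnorm v ^+ 2 /\ hnorm v ^+ 2 <= B * s2].

Definition complete_family (w : nat -> V) (P : pred nat) : Prop :=
  forall (x : V) (e : R), 0 < e -> exists (N : nat) (c : nat -> C),
    hnorm (x - \sum_(i < N | P i) c i *: w i) < e.

Definition riesz_basis (w : nat -> V) (P : pred nat) : Prop :=
  riesz_seq w P /\ complete_family w P.

Definition frame (w : nat -> V) (P : pred nat) : Prop :=
  exists A B : R, [/\ 0 < A, 0 < B & forall x : V,
    ((A * hnorm x ^+ 2)%:E <= \sum_(n <oo | P n) ((ComplexField.Normc.normc (ip x (w n))) ^+ 2)%:E)%E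
    /\ (\sum_(n <oo | P n) ((ComplexField.Normc.normc (ip x (w n))) ^+ 2)%:E <= (B * hnorm x ^+ 2)%:E)%E].

Definition prepend (hs : seq V) (f : nat -> V) : nat -> V :=
  fun n => if (n < size hs)%N then nth 0 hs n else f (n - size hs)%N.

Definition pseudo_riesz_seq (f : nat -> V) : Prop :=
  bessel f /\ exists sigma : seq nat, riesz_seq f (fun n => n \notin sigma).

Definition pseudo_frame (f : nat -> V) : Prop :=
  bessel f /\ exists hs : seq V, frame (prepend hs f) predT.

Definition pseudo_riesz_basis (f : nat -> V) : Prop :=
  bessel f /\ exists (sigma : seq nat) (hs : seq V),
    riesz_basis (prepend hs f)
      (fun n => (n < size hs)%N || ((n - size hs)%N \notin sigma)).

Definition synth_null (f : nat -> V) : set (nat -> C) :=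
  [set c | in_l2 c /\ has_sum (fun n => c n *: f n) 0].

Definition dist_null (f : nat -> V) (c : nat -> C) : R :=
  inf [set l2norm (fun n => c n - e n) | e in synth_null f].

(* gamma = inf_{c \in l^2 \ N_{S_f}} ||S_f c|| / d(c, N_{S_f})
   (an extended real; the infimum of the empty set is +oo) *)
Definition gamma_f (f : nat -> V) : \bar R :=
  ereal_inf [set r | exists (c : nat -> C) (s : V),
    [/\ in_l2 c, ~ synth_null f c, has_sum (fun n => c n *: f n) s
      & r = (hnorm s / dist_null f c)%:E]].

End HilbertDefs.

From HB Require Import structures.
From mathcomp Require Import all_boot all_order all_algebra.
From mathcomp Require Import all_classical all_reals.
From mathcomp Require Import ereal topology normedtype sequences.
From mathcomp Require Import complex.
From mathcomp Require Import lra ring zify.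
Import Order.TTheory GRing.Theory Num.Theory.
Import numFieldNormedType.Exports.
Local Open Scope ring_scope.

(* Only the finiteness of sum_n ||f n - g n||^2 matters, and it follows from
   the bound by gamma^2.  Riesz bounds, completeness and frame bounds survive
   any perturbation whose l^2-distance is small compared to the lower bound,
   since ||sum_n c_n (f n - g n)||^2 <= sum_n |c_n|^2 * sum_n ||f n - g n||^2.
   Choose M such that sum_(n >= M) ||f n - g n||^2 is below that margin.  For
   Riesz sequences, drop the indices below M.  For frames and Riesz bases,
   replace f n by g n only for n >= M; the resulting family keeps its type, and
   its finitely many members f n, n < M, are moved among the added vectors. *)

Lemma sqr_sum_mul_le (R : realFieldType) (I : Type) (r : seq I) (P : pred I)
    (a b : I -> R) :
  (\sum_(i <- r | P i) a i * b i) ^+ 2 <=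
  (\sum_(i <- r | P i) a i ^+ 2) * (\sum_(i <- r | P i) b i ^+ 2).
Proof.
set A := \sum_(i <- r | P i) a i ^+ 2; set B := \sum_(i <- r | P i) b i ^+ 2.
set D := \sum_(i <- r | P i) a i * b i.
have lagrange : \sum_(i <- r | P i) \sum_(j <- r | P j) (a i * b j - a j * b i) ^+ 2
    = (A * B + B * A) - 2 * (D * D).
  rewrite !big_distrlr -big_split mulr_sumr -sumrB /=.
  apply: eq_bigr => i _; rewrite -big_split mulr_sumr -sumrB /=.
  by apply: eq_bigr => j _; ring.
have : 0 <= (A * B + B * A) - 2 * (D * D).
  by rewrite -lagrange; apply: sumr_ge0 => i _; apply: sumr_ge0 => j _; exact: sqr_ge0.
rewrite expr2; lra.
Qed.

Section NonnegSeries.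
Context {R : realType}.
Local Open Scope ereal_scope.

Lemma nneseries_split_addn (u : nat -> \bar R) (K : nat) : (forall n, 0 <= u n) ->
  \sum_(n <oo) u n = \sum_(n < K) u n + \sum_(i <oo) u (i + K)%N.
Proof.
move=> u0; rewrite (nneseries_split 0 K) // nneseries_addn // add0n.
by rewrite big_mkord.
Qed.

Lemma nneseries_addn_le (u : nat -> \bar R) (K : nat) : (forall n, 0 <= u n) ->
  \sum_(i <oo) u (i + K)%N <= \sum_(n <oo) u n.
Proof.
move=> u0; rewrite [leRHS](nneseries_split_addn _ K u0) leeDr //.
by rewrite sume_ge0.
Qed.

Lemma psum_le_nneseries (u : nat -> R) (P : pred nat) (m N : nat) :
  (forall n, (0 <= u n)%R) -> (forall i, P i -> (m <= i)%N) ->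
  (\sum_(i < N | P i) u i)%:E <= \sum_(m <= i <oo) (u i)%:E.
Proof.
move=> u0 Pm; apply: le_trans (nneseries_lim_ge N _); last by move=> n _ _; rewrite lee_fin.
rewrite sumEFin lee_fin big_geq_mkord [leRHS]big_mkcond [leLHS]big_mkcond /=.
by apply: ler_sum => i _; case: ifP => [/Pm ->|_] //; case: ifP.
Qed.

Lemma nneseries_tail_small (u : nat -> R) : (forall n, (0 <= u n)%R) ->
  \sum_(n <oo) (u n)%:E < +oo -> forall e : R, (0 < e)%R ->
  exists M, forall M', (M <= M')%N -> \sum_(M' <= n <oo) (u n)%:E <= e%:E.
Proof.
move=> u0 fin e e0.
have [M _ tail_lt] := nneseries_tail_cvg fin (fun n _ => u0 n : 0 <= (u n)%:E)
  (nbhs_open_ereal_lt (f := fun=> e) e0).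
by exists M => M' /tail_lt /ltW.
Qed.

End NonnegSeries.

Section BigNat.
Context {M : zmodType}.

Lemma big_uniq_ord (s : seq nat) (P : pred nat) (F : nat -> M) :
  uniq s -> all P s ->
  \sum_(i <- s) F i = \sum_(i < (\max_(j <- s) j).+1 | P i) (if (i : nat) \in s then F i else 0).
Proof.
move=> s_uniq /allP sP.
rewrite -big_mkcondr -(big_mkord (fun i : nat => P i && (i \in s))).
rewrite -big_filter; apply: perm_big; apply: uniq_perm => //.
  by rewrite filter_uniq ?iota_uniq.
move=> i; rewrite mem_filter mem_index_iota; case i_s: (i \in s); rewrite ?andbF //=.
by rewrite sP // ltnS (@leq_bigmax_seq _ s xpredT id i i_s).
Qed.

Lemma big_ord_reindex (F : nat -> M) (N : nat) {P P' : pred nat} {phi psi : nat -> nat} :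
  (forall n, P' n -> P (phi n) /\ psi (phi n) = n) ->
  let s := [seq phi i | i <- [seq i <- iota 0 N | P' i]] in
  \sum_(i < N | P' i) F i =
  \sum_(j < (\max_(k <- s) k).+1 | P j) (if (j : nat) \in s then F (psi j) else 0).
Proof.
move=> inj s; have P'_filter i : i \in [seq i <- iota 0 N | P' i] -> P' i.
  by rewrite mem_filter => /andP[].
rewrite -(big_uniq_ord s P (fun j => F (psi j))); last first.
- by apply/allP => _ /mapP[i /P'_filter /inj[Pi _] ->].
- rewrite map_inj_in_uniq ?filter_uniq ?iota_uniq // => i j /P'_filter/inj[_ ii].
  by move=> /P'_filter/inj[_ jj] ij; rewrite -ii ij jj.
rewrite big_map big_filter -(big_mkord P') /index_iota subn0.
by apply: eq_bigr => i /inj[_ ->].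
Qed.

Lemma big_restrict (T : Type) (F : nat -> T -> M) (P P' : pred nat) (c : nat -> T) (z : T)
    (N : nat) :
  (forall i, P' i -> P i) -> (forall i, F i z = 0) ->
  \sum_(i < N | P i) F i (if P' i then c i else z) = \sum_(i < N | P' i) F i (c i).
Proof.
move=> sub Fz; rewrite big_mkcond [RHS]big_mkcond; apply: eq_bigr => i _.
by case: (boolP (P' i)) => [/sub ->|_]; case: (P i).
Qed.

End BigNat.

Section ComplexNorm.
Context {R : realType}.
Local Notation nc := (@ComplexField.Normc.normc R).

Lemma normc_ge0 (z : R[i]) : 0 <= nc z.
Proof. by case: z => a b; rewrite sqrtr_ge0. Qed.

Lemma sqr_normc (z : R[i]) : nc z ^+ 2 = complex.Re z ^+ 2 + complex.Im z ^+ 2.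
Proof. by case: z => a b; rewrite /= sqr_sqrtr // addr_ge0 ?sqr_ge0. Qed.

Lemma normc_conjc (z : R[i]) : nc z^*%C = nc z.
Proof. by case: z => a b; rewrite /= sqrrN. Qed.

Lemma normc_real (r : R) : 0 <= r -> nc r%:C%C = r.
Proof. by move=> r0; rewrite /= expr0n addr0 sqrtr_sqr ger0_norm. Qed.

Lemma sqr_normcB_le (a b : R[i]) : nc (a - b) ^+ 2 <= 2 * nc a ^+ 2 + 2 * nc b ^+ 2.
Proof.
have tri : nc (a - b) <= nc a + nc b by have := le_normcD a (- b); rewrite normcN.
apply: le_trans (_ : _ <= (nc a + nc b) ^+ 2) _.
  by rewrite ler_sqr ?nnegrE ?addr_ge0 ?normc_ge0.
by have := sqr_ge0 (nc a - nc b); lra.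
Qed.

End ComplexNorm.

Section InnerProductSpace.
Variable R : realType.
Local Notation C := R[i].
Variable V : lmodType C.
Variable ip : V -> V -> C.
Hypothesis ipl : forall (a : C) (x y z : V), ip (a *: x + y) z = a * ip x z + ip y z.
Hypothesis ipc : forall x y : V, ip y x = (ip x y)^*%C.
Hypothesis ipp : forall x : V, 0 <= complex.Re (ip x x).
Hypothesis ipd : forall x : V, ip x x = 0 -> x = 0.

Local Notation hn := (hnorm ip).
Local Notation nc := (@ComplexField.Normc.normc R).

Lemma ipDl x y z : ip (x + y) z = ip x z + ip y z.
Proof. by rewrite -[x in LHS]scale1r ipl mul1r. Qed.

Lemma ip0l z : ip 0 z = 0.
Proof. by apply: (addrI (ip 0 z)); rewrite -ipDl !addr0. Qed.

Lemma ipZl a x z : ip (a *: x) z = a * ip x z.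
Proof. by rewrite -[a *: x]addr0 ipl ip0l addr0. Qed.

Lemma ipNl x z : ip (- x) z = - ip x z.
Proof. by rewrite -scaleN1r ipZl mulN1r. Qed.

Lemma ipDr z x y : ip z (x + y) = ip z x + ip z y.
Proof. by rewrite ipc ipDl rmorphD /= -!ipc. Qed.

Lemma ipZr z a x : ip z (a *: x) = a^*%C * ip z x.
Proof. by rewrite ipc ipZl rmorphM /= -ipc. Qed.

Lemma ipNr z x : ip z (- x) = - ip z x.
Proof. by rewrite ipc ipNl rmorphN /= -ipc. Qed.

Lemma ip0r z : ip z 0 = 0.
Proof. by rewrite ipc ip0l rmorph0. Qed.

Lemma Im_ip_self x : complex.Im (ip x x) = 0.
Proof. by have := ipc x x; case: (ip x x) => a b [] /=; lra. Qed.

Lemma hnorm_ge0 x : 0 <= hn x.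
Proof. exact: sqrtr_ge0. Qed.

Lemma sqr_hnorm x : hn x ^+ 2 = complex.Re (ip x x).
Proof. exact: sqr_sqrtr. Qed.

Lemma hnorm0 : hn 0 = 0.
Proof. by rewrite /hnorm ip0l sqrtr0. Qed.

Lemma hnorm_eq0 x : hn x = 0 -> x = 0.
Proof.
move=> x0; apply: ipd; have := sqr_hnorm x; rewrite x0 expr0n /=.
by have := Im_ip_self x; case: (ip x x) => a b /= -> <-.
Qed.

Lemma hnormN x : hn (- x) = hn x.
Proof. by rewrite /hnorm ipNl ipNr opprK. Qed.

Lemma hnormZ a x : hn (a *: x) = nc a * hn x.
Proof.
rewrite /hnorm; have -> : complex.Re (ip (a *: x) (a *: x)) = nc a ^+ 2 * complex.Re (ip x x).
  rewrite ipZl ipZr sqr_normc; have := Im_ip_self x.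
  by case: (ip x x) => r s /= ->; case: a => p q /=; ring.
by rewrite sqrtrM ?sqr_ge0 // sqrtr_sqr ger0_norm ?normc_ge0.
Qed.

Lemma sqr_hnormD x y :
  hn (x + y) ^+ 2 = hn x ^+ 2 + hn y ^+ 2 + 2 * complex.Re (ip x y).
Proof.
rewrite !sqr_hnorm ipDl !ipDr !raddfD /= (ipc x y).
by case: (ip x y) => a b /=; ring.
Qed.

Lemma sqr_hnormD_le x y : hn (x + y) ^+ 2 <= 2 * hn x ^+ 2 + 2 * hn y ^+ 2.
Proof.
have := sqr_hnormD x (- y); have := sqr_hnormD x y.
rewrite hnormN ipNr raddfN /=; have := sqr_ge0 (hn (x - y)); lra.
Qed.

Lemma Re_ip_le x y : complex.Re (ip x y) <= hn x * hn y.
Proof.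
have expand := sqr_hnormD ((hn y)%:C%C *: x) (- ((hn x)%:C%C *: y)).
rewrite hnormN !hnormZ !normc_real ?hnorm_ge0 // ipNr ipZl ipZr conjc_real in expand.
have e : complex.Re (- ((hn y)%:C%C * ((hn x)%:C%C * ip x y))) =
    - (hn x * hn y * complex.Re (ip x y)) by case: (ip x y) => p q /=; ring.
rewrite e in expand.
have [xy0|] := ltrP 0 (hn x * hn y).
  rewrite -subr_ge0 -(pmulr_rge0 _ xy0).
  by have := sqr_ge0 (hn ((hn y)%:C%C *: x + - ((hn x)%:C%C *: y))); nra.
rewrite le_eqVlt ltNge mulr_ge0 ?hnorm_ge0 // orbF mulf_eq0.
by case/orP => /eqP/hnorm_eq0 ->; rewrite ?ip0l ?ip0r hnorm0 ?mulr0 ?mul0r.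
Qed.

Lemma normc_ip_le x y : nc (ip x y) <= hn x * hn y.
Proof.
have := Re_ip_le ((ip x y)^*%C *: x) y.
rewrite hnormZ normc_conjc ipZl -mulrA.
have -> : complex.Re ((ip x y)^*%C * ip x y) = nc (ip x y) ^+ 2.
  by rewrite sqr_normc; case: (ip x y) => p q /=; ring.
have [ip0|] := ltrP 0 (nc (ip x y)); first by rewrite expr2 ler_pM2l.
by move=> /le_trans + _; apply; rewrite mulr_ge0 ?hnorm_ge0.
Qed.

Lemma hnormD_le x y : hn (x + y) <= hn x + hn y.
Proof.
rewrite -ler_sqr ?nnegrE ?addr_ge0 ?hnorm_ge0 // sqr_hnormD.
by have := Re_ip_le x y; lra.
Qed.

Lemma hnorm_sum_le (I : Type) (r : seq I) (P : pred I) (F : I -> V) :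
  hn (\sum_(i <- r | P i) F i) <= \sum_(i <- r | P i) hn (F i).
Proof.
apply: (big_ind2 (fun v r => hn v <= r)) => [|v1 r1 v2 r2 h1 h2|//].
  by rewrite hnorm0.
exact: le_trans (hnormD_le _ _) (lerD h1 h2).
Qed.

Lemma sqr_hnorm_comb_le (I : Type) (r : seq I) (P : pred I) (c : I -> C) (d : I -> V) :
  hn (\sum_(i <- r | P i) c i *: d i) ^+ 2 <=
  (\sum_(i <- r | P i) nc (c i) ^+ 2) * (\sum_(i <- r | P i) hn (d i) ^+ 2).
Proof.
apply: le_trans _ (sqr_sum_mul_le _ _ r P (fun i => nc (c i)) (fun i => hn (d i))).
rewrite ler_sqr ?nnegrE ?hnorm_ge0 //; last first.
  by rewrite sumr_ge0 // => i _; rewrite mulr_ge0 ?normc_ge0 ?hnorm_ge0.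
apply: le_trans (hnorm_sum_le _ _ _ _) _.
by apply: ler_sum => i _; rewrite hnormZ.
Qed.

Local Notation comb w P N c := (\sum_(i < N | P i) c i *: w i).
Local Notation sqsum P N c := (\sum_(i < N | P i) nc (c i) ^+ 2).

Definition riesz_bounds (w : nat -> V) (P : pred nat) (A B : R) : Prop :=
  forall (N : nat) (c : nat -> C),
    A * sqsum P N c <= hn (comb w P N c) ^+ 2 /\ hn (comb w P N c) ^+ 2 <= B * sqsum P N c.

Lemma sqsum_ge0 (P : pred nat) N (c : nat -> C) : 0 <= sqsum P N c.
Proof. by rewrite sumr_ge0 // => i _; rewrite sqr_ge0. Qed.

Lemma sqr_hnorm_comb_diff_le {w w' : nat -> V} {P : pred nat} {eta : R} N (c : nat -> C) :
  (forall N, \sum_(i < N | P i) hn (w i - w' i) ^+ 2 <= eta) ->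
  hn (comb w P N c - comb w' P N c) ^+ 2 <= sqsum P N c * eta.
Proof.
move=> small; rewrite -sumrB.
under eq_bigr do rewrite -scalerBr.
exact: le_trans (sqr_hnorm_comb_le _ _ _ _ _) (ler_wpM2l (sqsum_ge0 _ _ _) (small N)).
Qed.

Lemma riesz_bounds_perturb (w w' : nat -> V) (P : pred nat) (A B eta : R) :
  riesz_bounds w P A B -> 0 <= eta -> 4 * eta <= A ->
  (forall N, \sum_(i < N | P i) hn (w i - w' i) ^+ 2 <= eta) ->
  riesz_bounds w' P (A / 4) (2 * B + 2 * eta).
Proof.
move=> wAB eta0 etaA small N c.
have [lo hi] := wAB N c; have s0 := sqsum_ge0 P N c.
have du := sqr_hnorm_comb_diff_le N c small.
have := sqr_hnormD_le (comb w' P N c) (comb w P N c - comb w' P N c).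
have := sqr_hnormD_le (comb w P N c) (- (comb w P N c - comb w' P N c)).
rewrite hnormN opprB !subrKC; nra.
Qed.

Lemma riesz_bounds_sub (w : nat -> V) (P P' : pred nat) (A B : R) :
  (forall n, P' n -> P n) -> riesz_bounds w P A B -> riesz_bounds w P' A B.
Proof.
move=> sub wAB N c; have := wAB N (fun i => if P' i then c i else 0).
rewrite (big_restrict _ (fun _ z => nc z ^+ 2)) //; last by move=> i; rewrite Normc.normc0 expr0n.
by rewrite (big_restrict _ (fun i z => z *: w i)) // => i; rewrite scale0r.
Qed.

Lemma riesz_seq_perturb {w : nat -> V} {P : pred nat} :
  riesz_seq ip w P -> exists2 eta : R, 0 < eta & forall (w' : nat -> V) (P' : pred nat),
    (forall n, P' n -> P n) ->
    (forall N, \sum_(i < N | P' i) hn (w i - w' i) ^+ 2 <= eta) -> riesz_seq ip w' P'.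
Proof.
case=> A [B [A0 B0 wAB]]; exists (A / 4); first by rewrite divr_gt0.
move=> w' P' sub small; exists (A / 4), (2 * B + 2 * (A / 4)); split; [lra|lra|].
apply: riesz_bounds_perturb small; [exact: riesz_bounds_sub wAB | lra | lra].
Qed.

Lemma comb_add (w : nat -> V) (P : pred nat) N1 N2 (c1 c2 : nat -> C) :
  exists N (c : nat -> C), comb w P N c = comb w P N1 c1 + comb w P N2 c2.
Proof.
exists (maxn N1 N2), (fun i => (if (i < N1)%N then c1 i else 0) + (if (i < N2)%N then c2 i else 0)).
under eq_bigr do rewrite scalerDl.
rewrite big_split /= (big_ord_widen_cond _ P (fun i => c1 i *: w i) (leq_maxl N1 N2)).
rewrite (big_ord_widen_cond _ P (fun i => c2 i *: w i) (leq_maxr N1 N2)) !big_mkcondr.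
by congr (_ + _); apply: eq_bigr => i _; case: ifP; rewrite ?scale0r.
Qed.

Lemma complete_family_of_approx (w : nat -> V) (P : pred nat) (q : R) :
  0 <= q < 1 ->
  (forall y, exists N (c : nat -> C), hn (y - comb w P N c) ^+ 2 <= q * hn y ^+ 2) ->
  complete_family ip w P.
Proof.
move=> /andP[q0 q1] approx x e e0.
have iter k : exists N (c : nat -> C), hn (x - comb w P N c) ^+ 2 <= q ^+ k * hn x ^+ 2.
  elim: k => [|k [N1 [c1 h1]]].
    by exists 0%N, (fun _ => 0); rewrite big_ord0 subr0 expr0 mul1r.
  have [N2 [c2 h2]] := approx (x - comb w P N1 c1).
  have [N [c sumE]] := comb_add w P N1 N2 c1 c2.
  exists N, c; rewrite sumE opprD addrA; apply: le_trans h2 _.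
  by rewrite [q ^+ k.+1]exprS -mulrA ler_wpM2l.
have hx1 : 0 < hn x ^+ 2 + 1 by rewrite ltr_wpDl ?sqr_ge0.
have qk0 : \forall k \near \oo%classic, `|q ^+ k| < e ^+ 2 / (hn x ^+ 2 + 1).
  by apply: cvgr0_norm_lt; [apply: cvg_expr; rewrite ger0_norm | rewrite divr_gt0 ?exprn_gt0].
have [k _ /(_ k (leqnn k))] := qk0; rewrite ger0_norm ?exprn_ge0 // ltr_pdivlMr //.
move=> qk; have [N [c hc]] := iter k; exists N, c.
rewrite -ltr_sqr ?nnegrE ?hnorm_ge0 ?ltW //; apply: le_lt_trans hc _.
by apply: le_lt_trans qk; rewrite ler_wpM2l ?exprn_ge0 ?lerDl.
Qed.

Lemma complete_family_perturb (w w' : nat -> V) (P : pred nat) (A eta : R) :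
  (forall N (c : nat -> C), A * sqsum P N c <= hn (comb w P N c) ^+ 2) ->
  0 <= eta -> 16 * eta <= A ->
  (forall N, \sum_(i < N | P i) hn (w i - w' i) ^+ 2 <= eta) ->
  complete_family ip w P -> complete_family ip w' P.
Proof.
(* A w-combination within ||y||/3 of y has coefficients controlled by the
   lower bound A, so the same w'-combination is within ||y||/sqrt 2 of y. *)
move=> lo eta0 etaA small wC; apply: (@complete_family_of_approx _ _ (1 / 2)) => [|y].
  by apply/andP; split; lra.
have [y0|y_neq0] := eqVneq (hn y) 0.
  by exists 0%N, (fun=> 0); rewrite big_ord0 subr0 y0 expr0n /= mulr0.
have y_gt0 : 0 < hn y by rewrite lt_def y_neq0 hnorm_ge0.
have [N [c yv]] := wC y (hn y / 3) (divr_gt0 y_gt0 (ltr0Sn _ 2)); exists N, c.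
have s0 := sqsum_ge0 P N c.
have du := sqr_hnorm_comb_diff_le N c small.
have lo' := lo N c.
have yv2 : 9 * hn (y - comb w P N c) ^+ 2 <= hn y ^+ 2.
  by have := hnorm_ge0 (y - comb w P N c); nra.
have := sqr_hnormD_le (y - comb w P N c) (comb w P N c - comb w' P N c).
rewrite addrA subrK.
have := sqr_hnormD_le y (- (y - comb w P N c)).
rewrite hnormN opprB subrKC; nra.
Qed.

Lemma riesz_basis_perturb {w : nat -> V} {P : pred nat} :
  riesz_basis ip w P -> exists2 eta : R, 0 < eta & forall w' : nat -> V,
    (forall N, \sum_(i < N | P i) hn (w i - w' i) ^+ 2 <= eta) -> riesz_basis ip w' P.
Proof.
case=> -[A [B [A0 B0 wAB]]] wC; exists (A / 16); first by rewrite divr_gt0.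
move=> w' small; split.
  exists (A / 4), (2 * B + 2 * (A / 16)); split; [lra|lra|].
  by apply: riesz_bounds_perturb small => //; lra.
apply: (@complete_family_perturb w w' P A (A / 16)) small wC; [|lra|lra].
by move=> N c; case: (wAB N c).
Qed.

Lemma comb_reindex {w w' : nat -> V} {P P' : pred nat} {phi psi : nat -> nat} :
  (forall n, P' n -> [/\ P (phi n), psi (phi n) = n & w' n = w (phi n)]) ->
  forall N (c : nat -> C), exists N2 (c2 : nat -> C),
    comb w' P' N c = comb w P N2 c2 /\ sqsum P' N c = sqsum P N2 c2.
Proof.
move=> reidx N c; have inj n : P' n -> P (phi n) /\ psi (phi n) = n by case/reidx.
set s := [seq phi i | i <- [seq i <- iota 0 N | P' i]].
exists (\max_(k <- s) k).+1, (fun j => if j \in s then c (psi j) else 0).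
rewrite (big_ord_reindex (fun i => c i *: w' i) N inj).
rewrite (big_ord_reindex (fun i => nc (c i) ^+ 2) N inj) -/s.
split; apply: eq_bigr => j _; case: ifP => [j_s|_]; rewrite ?scale0r ?Normc.normc0 ?expr0n //.
by case/mapP: j_s => i + ->; rewrite mem_filter => /andP[/reidx[_ -> ->] _].
Qed.

Lemma riesz_basis_reindex (w w' : nat -> V) (P P' : pred nat) (phi psi : nat -> nat) :
  (forall n, P' n -> [/\ P (phi n), psi (phi n) = n & w' n = w (phi n)]) ->
  (forall j, P j -> P' (psi j) /\ phi (psi j) = j) ->
  riesz_basis ip w P -> riesz_basis ip w' P'.
Proof.
move=> reidx reidx' [[A [B [A0 B0 wAB]]] wC]; split.
  exists A, B; split => // N c /=.
  by have [N2 [c2 [-> ->]]] := comb_reindex reidx N c; apply: wAB.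
move=> x e e0; have [N [c xc]] := wC x e e0.
have reidxC j : P j -> [/\ P' (psi j), phi (psi j) = j & w j = w' (psi j)].
  by move=> /reidx'[P'j phi_psi]; have [_ _ ->] := reidx _ P'j; rewrite phi_psi.
have [N2 [c2 [combE _]]] := comb_reindex reidxC N c.
by exists N2, c2; rewrite -combE.
Qed.

Lemma riesz_basis_compress (W u : nat -> V) (P : pred nat) (T M : nat) :
  (forall j, (T <= j)%N -> P j) -> (forall i, u (i + M)%N = W (i + T)%N) ->
  riesz_basis ip W P ->
  let hs := [seq W j | j <- [seq j <- iota 0 T | P j]] in
  riesz_basis ip (prepend hs u) (fun n => (n < size hs)%N || ((n - size hs)%N \notin iota 0 M)).
Proof.
move=> P_tail uW WP hs; rewrite {}/hs; set L := [seq j <- iota 0 T | P j].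
have memL j : (j \in L) = (j < T)%N && P j by rewrite mem_filter mem_iota andbC.
apply: (@riesz_basis_reindex W _ P _
  (fun n => if (n < size L)%N then nth 0%N L n else (n - size L - M + T)%N)
  (fun j => if (j < T)%N then index j L else (j - T + size L + M)%N) _ _ WP) => [n|j Pj].
  rewrite /prepend size_map mem_iota add0n /=; case: ltnP => [n_lt|n_ge].
    have := mem_nth 0%N n_lt; rewrite memL => /andP[-> ->].
    by rewrite index_uniq ?filter_uniq ?iota_uniq ?(nth_map 0%N).
  rewrite -leqNgt => M_le; rewrite P_tail ?leq_addl // ifN -?leqNgt ?leq_addl //.
  by split => //; [lia | rewrite -uW; congr u; lia].
case: (ltnP j T) => [j_lt|j_ge]; rewrite size_map mem_iota.
  have jL : j \in L by rewrite memL j_lt.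
  by rewrite index_mem jL nth_index.
have L_le : (size L <= j - T + size L + M)%N by lia.
by rewrite ltnNge L_le leq0n /= -leqNgt; split; lia.
Qed.

Definition sqdist (w w' : nat -> V) : \bar R :=
  (\sum_(n <oo) (hn (w n - w' n) ^+ 2)%:E)%E.

Lemma sqdistC (w w' : nat -> V) : sqdist w w' = sqdist w' w.
Proof. by apply: eq_eseriesr => n _; rewrite -opprB hnormN. Qed.

Local Notation frame_sum w x := (\sum_(n <oo) (nc (ip x (w n)) ^+ 2)%:E)%E.

Lemma sqr_normc_ip_perturb (x a b : V) :
  nc (ip x b) ^+ 2 <= 2 * nc (ip x a) ^+ 2 + 2 * (hn x ^+ 2 * hn (a - b) ^+ 2).
Proof.
have -> : ip x b = ip x a - ip x (a - b) by rewrite ipDr ipNr opprB subrKC.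
apply: le_trans (sqr_normcB_le _ _) _; rewrite lerD2l ler_wpM2l // -exprMn.
by rewrite ler_sqr ?nnegrE ?normc_ge0 ?mulr_ge0 ?hnorm_ge0 ?normc_ip_le.
Qed.

Lemma frame_sum_perturb_le (w w' : nat -> V) (x : V) :
  (frame_sum w' x <= 2%:E * frame_sum w x + (2 * hn x ^+ 2)%:E * sqdist w w')%E.
Proof.
have ge0 (r : R) : (0 <= (r ^+ 2)%:E)%E by rewrite lee_fin sqr_ge0.
rewrite /sqdist -nneseriesZl; last by move=> n _; apply: ge0.
rewrite -nneseriesZl; last by move=> n _; apply: ge0.
rewrite -nneseriesD => [|n _ _|n _ _]; last 2 first.
- by rewrite mule_ge0.
- by rewrite mule_ge0 // lee_fin mulr_ge0 ?sqr_ge0.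
apply: lee_nneseries => [n _ _|n _]; first exact: ge0.
by rewrite -!EFinM -EFinD lee_fin -mulrA sqr_normc_ip_perturb.
Qed.

Lemma bessel_perturb {w w' : nat -> V} :
  bessel ip w -> (sqdist w w' < +oo)%E -> bessel ip w'.
Proof.
case=> B [B0 wB] d_fin.
have d_ge0 : (0 <= sqdist w w')%E by apply: nneseries_ge0 => n _ _; rewrite lee_fin sqr_ge0.
have dE : sqdist w w' = (fine (sqdist w w'))%:E by rewrite fineK // ge0_fin_numE.
have d0 : 0 <= fine (sqdist w w') by rewrite -lee_fin -dE.
exists (2 * B + 2 * fine (sqdist w w')); split => [|x]; first lra.
apply: le_trans (frame_sum_perturb_le w w' x) _.
apply: le_trans (leeD2r _ (lee_wpmul2l _ (wB x))) _; first by rewrite lee_fin.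
by rewrite dE -!EFinM -EFinD lee_fin; nra.
Qed.

Lemma frame_perturb {w : nat -> V} :
  frame ip w predT -> exists2 eta : R, 0 < eta & forall w' : nat -> V,
    (sqdist w w' <= eta%:E)%E -> frame ip w' predT.
Proof.
case=> A [B [A0 B0 wAB]]; exists (A / 4); first by rewrite divr_gt0.
move=> w' small; exists (A / 4), (2 * B + A / 2); split => [||x]; [lra|lra|].
have [lo hi] := wAB x; have x0 := sqr_ge0 (hn x).
have d_le : ((2 * hn x ^+ 2)%:E * sqdist w w' <= (A / 2 * hn x ^+ 2)%:E)%E.
  apply: le_trans (lee_wpmul2l _ small) _; first by rewrite lee_fin mulr_ge0.
  by rewrite -EFinM lee_fin; lra.
split.
  have : ((A / 2 * hn x ^+ 2)%:E + (A / 2 * hn x ^+ 2)%:E <=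
          2%:E * frame_sum w' x + (A / 2 * hn x ^+ 2)%:E)%E.
    rewrite -EFinD; apply: le_trans (le_trans _ lo) _; first by rewrite lee_fin; lra.
    apply: le_trans (frame_sum_perturb_le w' w x) _.
    by rewrite sqdistC leeD2l.
  rewrite leeD2rE // -lee_pdivrMl // => half; apply: le_trans half.
  by rewrite -EFinM lee_fin; lra.
apply: le_trans (frame_sum_perturb_le w w' x) _.
apply: le_trans (leeD2r _ (lee_wpmul2l _ hi)) _; first by rewrite lee_fin.
by apply: le_trans (leeD2l _ d_le) _; rewrite -EFinM -EFinD lee_fin; lra.
Qed.

Lemma prepend_addn (ks : seq V) (u : nat -> V) (i : nat) :
  prepend ks u (i + size ks) = u i.
Proof. by rewrite /prepend ltnNge leq_addl addnK. Qed.

Lemma frame_sum_prepend (ks : seq V) (u : nat -> V) (x : V) :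
  frame_sum (prepend ks u) x =
  ((\sum_(n < size ks) nc (ip x (nth 0 ks n)) ^+ 2)%:E + frame_sum u x)%E.
Proof.
rewrite (nneseries_split_addn _ (size ks)) => [|n]; last by rewrite lee_fin sqr_ge0.
rewrite sumEFin; congr (_%:E + _)%E.
  by apply: eq_bigr => n _; rewrite /prepend ltn_ord.
by apply: eq_eseriesr => n _; rewrite prepend_addn.
Qed.

Lemma bessel_prepend (ks : seq V) (u : nat -> V) :
  bessel ip u -> bessel ip (prepend ks u).
Proof.
case=> B [B0 uB]; exists (\sum_(n < size ks) hn (nth 0 ks n) ^+ 2 + B); split => [|x].
  by rewrite ltr_wpDl // sumr_ge0 // => n _; rewrite sqr_ge0.
rewrite frame_sum_prepend mulrDl EFinD leeD ?uB // lee_fin mulr_suml.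
apply: ler_sum => n _; rewrite -exprMn mulrC ler_sqr ?nnegrE ?normc_ge0 //.
  exact: normc_ip_le.
by rewrite mulr_ge0 ?hnorm_ge0.
Qed.

Lemma frame_prepend_shift (ks : seq V) (u : nat -> V) (M : nat) :
  frame ip (prepend ks (fun i => u (i + M)%N)) predT -> bessel ip u ->
  frame ip (prepend ks u) predT.
Proof.
case=> A [? [A0 _ lo]] /(bessel_prepend ks) [B [B0 hi]].
exists A, B; split => // x; split; last exact: hi.
apply: le_trans (proj1 (lo x)) _.
rewrite !frame_sum_prepend leeD2l //.
by apply: nneseries_addn_le => n; rewrite lee_fin sqr_ge0.
Qed.

Definition splice (M : nat) (f g : nat -> V) : nat -> V :=
  fun n => if (n < M)%N then f n else g n.

Lemma splice_addn (M : nat) (f g : nat -> V) (i : nat) : splice M f g (i + M) = g (i + M)%N.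
Proof. by rewrite /splice ltnNge leq_addl. Qed.

Lemma prepend_splice_head (hs : seq V) (M : nat) (f g : nat -> V) (n : nat) :
  (n < M + size hs)%N -> prepend hs (splice M f g) n = prepend hs f n.
Proof.
by move=> n_lt; rewrite /prepend /splice; case: ltnP => // hs_le; rewrite ifT //; lia.
Qed.

Lemma sqdist_prepend_splice (hs : seq V) (M : nat) (f g : nat -> V) :
  sqdist (prepend hs f) (prepend hs (splice M f g)) =
  (\sum_(M <= n <oo) (hn (f n - g n) ^+ 2)%:E)%E.
Proof.
have ge0 (v : V) : (0 <= (hn v ^+ 2)%:E)%E by rewrite lee_fin sqr_ge0.
rewrite /sqdist (nneseries_split_addn _ (M + size hs)) // big1 ?add0e => [|n _]; last first.
  by rewrite prepend_splice_head // subrr hnorm0 expr0n.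
rewrite -(nneseries_addn M) //; apply: eq_eseriesr => n _.
by rewrite addnA !prepend_addn splice_addn.
Qed.

Lemma prepend_iota (w : nat -> V) (T : nat) :
  prepend [seq w n | n <- iota 0 T] (fun i => w (i + T)%N) = w.
Proof.
apply/funext => n; rewrite /prepend size_map size_iota; case: ltnP => [n_lt|n_ge].
  by rewrite (nth_map 0%N) ?size_iota // nth_iota.
by rewrite subnK.
Qed.

Lemma pseudo_riesz_seq_perturb (f g : nat -> V) :
  (sqdist f g < +oo)%E -> pseudo_riesz_seq ip f -> pseudo_riesz_seq ip g.
Proof.
move=> d_fin [bf [sigma fR]]; split; first exact: bessel_perturb bf d_fin.
have [eta eta0 stable] := riesz_seq_perturb fR.
have [M tail] := nneseries_tail_small _ (fun n => sqr_ge0 (hn (f n - g n))) d_fin _ eta0.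
exists (sigma ++ iota 0 M); apply: stable => [n|N].
  by rewrite mem_cat negb_or => /andP[].
rewrite -lee_fin; apply: le_trans (tail M (leqnn M)).
apply: (psum_le_nneseries (fun n => hn (f n - g n) ^+ 2)
  (fun n => n \notin sigma ++ iota 0 M)) => [n|n]; first exact: sqr_ge0.
by rewrite mem_cat mem_iota negb_or leq0n add0n /= -leqNgt => /andP[].
Qed.

Lemma pseudo_frame_perturb (f g : nat -> V) :
  (sqdist f g < +oo)%E -> pseudo_frame ip f -> pseudo_frame ip g.
Proof.
move=> d_fin [bf [hs fF]]; have bg := bessel_perturb bf d_fin; split => //.
have [eta eta0 stable] := frame_perturb fF.
have [M tail] := nneseries_tail_small _ (fun n => sqr_ge0 (hn (f n - g n))) d_fin _ eta0.
set W := prepend hs (splice M f g).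
have : frame ip W predT by apply: stable; rewrite sqdist_prepend_splice tail.
have W_tail : (fun i => W (i + (M + size hs))%N) = (fun i => g (i + M)%N).
  by apply/funext => i; rewrite /W addnA prepend_addn splice_addn.
rewrite -(prepend_iota W (M + size hs)) W_tail => WF.
by exists [seq W n | n <- iota 0 (M + size hs)]; apply: frame_prepend_shift WF bg.
Qed.

Lemma pseudo_riesz_basis_perturb (f g : nat -> V) :
  (sqdist f g < +oo)%E -> pseudo_riesz_basis ip f -> pseudo_riesz_basis ip g.
Proof.
move=> d_fin [bf [sigma [hs fRB]]]; split; first exact: bessel_perturb bf d_fin.
have [eta eta0 stable] := riesz_basis_perturb fRB.
have [M0 tail] := nneseries_tail_small _ (fun n => sqr_ge0 (hn (f n - g n))) d_fin _ eta0.
set M := maxn M0 (\max_(m <- sigma) m).+1.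
have sigma_lt m : m \in sigma -> (m < M)%N.
  move=> m_in; have m_le : (m <= \max_(k <- sigma) k)%N by apply: leq_bigmax_seq.
  by rewrite /M; lia.
set P := fun n => (n < size hs)%N || ((n - size hs)%N \notin sigma).
set W := prepend hs (splice M f g).
have WRB : riesz_basis ip W P.
  apply: stable => N; rewrite -lee_fin; apply: le_trans (tail M (leq_maxl _ _)).
  rewrite -(sqdist_prepend_splice hs).
  apply: (psum_le_nneseries (fun n => hn (prepend hs f n - W n) ^+ 2) P) => // n.
  exact: sqr_ge0.
exists (iota 0 M), [seq W j | j <- [seq j <- iota 0 (M + size hs) | P j]].
apply: riesz_basis_compress WRB => [j|i]; last by rewrite /W addnA prepend_addn splice_addn.
rewrite /P => j_ge; apply/orP; right; apply/negP => /sigma_lt; lia.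
Qed.

End InnerProductSpace.

Theorem mainTheorem11 (R : realType) (V : lmodType R[i]) (ip : V -> V -> R[i])
  (HV : separable_hilbert ip) (f g : nat -> V) :
  (\sum_(n <oo) ((hnorm ip (f n - g n)) ^+ 2)%:E < gamma_f ip f * gamma_f ip f)%E ->
  [/\ (pseudo_riesz_seq ip f -> pseudo_riesz_seq ip g),
      (pseudo_frame ip f -> pseudo_frame ip g)
    & (pseudo_riesz_basis ip f -> pseudo_riesz_basis ip g)].
Proof.
move=> small; have [[ipl ipc ipp ipd _] _] := HV.
have d_fin : (\sum_(n <oo) (hnorm ip (f n - g n) ^+ 2)%:E < +oo)%E.
  exact: lt_le_trans small (leey _).
split; [exact: pseudo_riesz_seq_perturb | exact: pseudo_frame_perturb |
        exact: pseudo_riesz_basis_perturb].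
Qed.
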